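(* Let $V$ be a finite-dimensional vector space over a division ring, and let $k_1,k_2$ be integers with $1<k_1<\dim V-1$ and $k_1+k_2=\dim V$. Then $$\mathcal{H}_{k_1,k_2}(V)=\{(U_1,U_2)\in\mathrm{Sub}_{k_1}(V)\times\mathrm{Sub}_{k_2}(V): \dim(U_1\cap U_2)>0\}$$ is a non-degenerate, non-spiky hyperplane of the Segre product $\mathbf{P}_{k_1}(V)\otimes\mathbf{P}_{k_2}(V)$.
   Context: $\mathrm{Sub}_m(V)$ is the set of $m$-dimensional subspaces of $V$. The Grassmann space $\mathbf{P}_m(V)$ has points $\mathrm{Sub}_m(V)$ and lines the pencils $\{U\in\mathrm{Sub}_m(V):H\subseteq U\subseteq B\}$ for $H\in\mathrm{Sub}_{m-1}(V)$, $B\in\mathrm{Sub}_{m+1}(V)$, $H\subseteq B$. Segre product of two partial linear spaces $(S_1,\mathcal{L}_1),(S_2,\mathcal{L}_2)$: points $S_1\times S_2$, lines $l\times\{b\}$ and $\{a\}\times m$ with $l\in\mathcal{L}_1$, $m\in\mathcal{L}_2$. Points are collinear if on a common line. Subspace: any line meeting it in at least two points lies in it; hyperplane: proper subspace meeting every line; a set $X$ is spiky if every point of $X$ is collinear with some point outside $X$. For $\mathcal{H}\subseteq S_1\times S_2$ and $a=(a_1,a_2)$: $\mathcal{H}^{[a]}_1=\{x:(x,a_2)\in\mathcal{H}\}$, $\mathcal{H}^{[a]}_2=\{y:(a_1,y)\in\mathcal{H}\}$; a hyperplane $\mathcal{H}$ is non-degenerate if all these sets are hyperplanes of the respective factors.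 *)

From HB Require Import structures.
From mathcomp Require Import all_boot all_order all_algebra.
Set Implicit Arguments. Unset Strict Implicit. Unset Printing Implicit Defensive.
Import GRing.Theory.
Local Open Scope ring_scope.

Definition is_division_ring (K : unitRingType) : Prop :=
  forall x : K, x != 0 -> x \is a GRing.unit.

Section LinAlg.
Variables (K : unitRingType) (V : lmodType K).

Definition lincomb (m : nat) (v : 'I_m -> V) (c : 'I_m -> K) : V :=
  \sum_(i < m) c i *: v i.

Definition lin_indep (m : nat) (v : 'I_m -> V) : Prop :=
  forall c : 'I_m -> K, lincomb v c = 0 -> forall i, c i = 0.

Definition spans (U : V -> Prop) (m : nat) (v : 'I_m -> V) : Prop :=
  forall x, U x <-> exists c, x = lincomb v c.

Definition has_dim (U : V -> Prop) (m : nat) : Prop :=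
  exists v : 'I_m -> V, lin_indep v /\ spans U v.

Definition Sub (m : nat) := {U : V -> Prop | has_dim U m}.

Definition incl (A B : V -> Prop) : Prop := forall x, A x -> B x.

Definition gr_line (m : nat) (l : Sub m -> Prop) : Prop :=
  exists (H B : V -> Prop), has_dim H m.-1 /\ has_dim B m.+1 /\ incl H B /\
    forall U : Sub m, l U <-> (incl H (sval U) /\ incl (sval U) B).
End LinAlg.
Arguments gr_line {K V} m l.
Arguments Sub {K} V m.

Section PLS.
Variables (P : Type) (L : (P -> Prop) -> Prop).

Definition collinear (p q : P) : Prop := exists l, L l /\ l p /\ l q.

Definition is_subspace (X : P -> Prop) : Prop :=
  forall l, L l -> (exists p q, p <> q /\ l p /\ l q /\ X p /\ X q) ->
    forall r, l r -> X r.

Definition is_hyperplane (X : P -> Prop) : Prop :=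
  is_subspace X /\ (exists p, ~ X p) /\ (forall l, L l -> exists p, l p /\ X p).

Definition spiky (X : P -> Prop) : Prop :=
  forall p, X p -> exists q, ~ X q /\ collinear p q.
End PLS.

Section Segre.
Variables (P1 P2 : Type) (L1 : (P1 -> Prop) -> Prop) (L2 : (P2 -> Prop) -> Prop).

Definition segre_line (l : P1 * P2 -> Prop) : Prop :=
  (exists l1 b, L1 l1 /\ forall x, l x <-> (l1 x.1 /\ x.2 = b)) \/
  (exists a l2, L2 l2 /\ forall x, l x <-> (x.1 = a /\ l2 x.2)).

Definition section1 (H : P1 * P2 -> Prop) (a : P1 * P2) : P1 -> Prop :=
  fun x => H (x, a.2).
Definition section2 (H : P1 * P2 -> Prop) (a : P1 * P2) : P2 -> Prop :=
  fun y => H (a.1, y).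

Definition non_degenerate (H : P1 * P2 -> Prop) : Prop :=
  is_hyperplane segre_line H /\
  forall a, is_hyperplane L1 (section1 H a) /\ is_hyperplane L2 (section2 H a).
End Segre.

Definition Hk {K : unitRingType} {V : lmodType K} {k1 k2 : nat}
  (x : Sub V k1 * Sub V k2) : Prop :=
  exists d, (0 < d)%N /\ has_dim (fun v => sval x.1 v /\ sval x.2 v) d.

From Pilot Require Import Defs.
From HB Require Import structures.
From mathcomp Require Import all_boot all_order all_algebra zify.
From Stdlib Require Import Classical ClassicalEpsilon FunctionalExtensionality PropExtensionality ProofIrrelevance.
Set Implicit Arguments. Unset Strict Implicit. Unset Printing Implicit Defensive.
Import GRing.Theory.
Local Open Scope ring_scope.

(* Fix a subspace W of dimension n - m. The m-subspaces meeting W nontrivially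
   form a hyperplane of the Grassmann space P_m(V): on a pencil H < U < B, since
   dim B + dim W > n some member of the pencil passes through a nonzero vector of
   B ∩ W; if two members meet W then so does every member; and a complement of W
   is a point outside. The sections of H_{k1,k2} at (U1, U2) are exactly these
   hyperplanes for W = U2, resp. W = U1, so H_{k1,k2} is a non-degenerate
   hyperplane of the Segre product. It is not spiky: as k1, k2 >= 2 there are
   U1, U2 whose intersection contains a plane; then every hyperplane of U1 still
   meets U2 (and symmetrically), so every point collinear with (U1, U2) lies in
   H_{k1,k2}. *)

Lemma hyperplane_eq (P : Type) (L : (P -> Prop) -> Prop) (X Y : P -> Prop) :
  (forall p, X p <-> Y p) -> is_hyperplane L X -> is_hyperplane L Y.
Proof.
move=> XY [Xsub [[p Xp] Xmeet]]; split.
  move=> l hl [a [b [ab [la [lb [Ya Yb]]]]]] r lr; apply/XY.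
  by apply: (Xsub l hl) => //; exists a, b; rewrite !XY.
split; first by exists p; rewrite -XY.
by move=> l /Xmeet [q [lq Xq]]; exists q; rewrite -XY.
Qed.

Section SegreProduct.
Variables (P1 P2 : Type) (L1 : (P1 -> Prop) -> Prop) (L2 : (P2 -> Prop) -> Prop).
Variable X : P1 * P2 -> Prop.

Hypothesis sections_hyperplane : forall a,
  is_hyperplane L1 (section1 X a) /\ is_hyperplane L2 (section2 X a).

Lemma segre_hyperplane (a : P1 * P2) : is_hyperplane (segre_line L1 L2) X.
Proof.
split.
  move=> l [[l1 [b [hl1 hl]]]|[c [l2 [hl2 hl]]]] [p [q [pq [lp [lq [Xp Xq]]]]]] r lr.
  - move/hl: lp => [l1p p2]; move/hl: lq => [l1q q2]; move/hl: lr => [l1r r2].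
    have [[sub _] _] := sections_hyperplane p.
    have -> : r = (r.1, p.2) by rewrite p2 -r2 -surjective_pairing.
    apply: (sub l1 hl1) => //; exists p.1, q.1; split.
      by move=> pq1; apply: pq; rewrite [p]surjective_pairing [q]surjective_pairing pq1 p2 q2.
    rewrite /section1 /= -surjective_pairing p2 -q2 -surjective_pairing.
    by do !split.
  - move/hl: lp => [p1 l2p]; move/hl: lq => [q1 l2q]; move/hl: lr => [r1 l2r].
    have [_ [sub _]] := sections_hyperplane p.
    have -> : r = (p.1, r.2) by rewrite p1 -r1 -surjective_pairing.
    apply: (sub l2 hl2) => //; exists p.2, q.2; split.
      by move=> pq2; apply: pq; rewrite [p]surjective_pairing [q]surjective_pairing pq2 p1 q1.
    rewrite /section2 /= -surjective_pairing p1 -q1 -surjective_pairing.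
    by do !split.
split.
  have [[_ [[x nXx] _]] _] := sections_hyperplane a.
  by exists (x, a.2).
move=> l [[l1 [b [hl1 hl]]]|[c [l2 [hl2 hl]]]].
  have [[_ [_ meet1]] _] := sections_hyperplane (a.1, b).
  have [x [l1x Xx]] := meet1 _ hl1.
  by exists (x, b); split; first exact/hl.
have [_ [_ [_ meet2]]] := sections_hyperplane (c, a.2).
have [y [l2y Xy]] := meet2 _ hl2.
by exists (c, y); split; first exact/hl.
Qed.

End SegreProduct.

Lemma segre_not_spiky (P1 P2 : Type) (L1 : (P1 -> Prop) -> Prop)
    (L2 : (P2 -> Prop) -> Prop) (X : P1 * P2 -> Prop) (p : P1 * P2) :
  X p ->
  (forall l1 x, L1 l1 -> l1 p.1 -> l1 x -> X (x, p.2)) ->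
  (forall l2 y, L2 l2 -> l2 p.2 -> l2 y -> X (p.1, y)) ->
  ~ spiky (segre_line L1 L2) X.
Proof.
move=> Xp line1 line2 /(_ p Xp) [q [nXq [l [[[l1 [b [hl1 hl]]]|[a [l2 [hl2 hl]]]] [lp lq]]]]].
  move/hl: lp => [l1p p2]; move/hl: lq => [l1q q2]; apply: nXq.
  by rewrite [q]surjective_pairing q2 -p2; exact: line1 l1q.
move/hl: lp => [p1 l2p]; move/hl: lq => [q1 l2q]; apply: nXq.
by rewrite [q]surjective_pairing q1 -p1; exact: line2 l2q.
Qed.

Section LinearAlgebra.
Variables (K : unitRingType) (V : lmodType K).
Hypothesis K_division : is_division_ring K.

Definition lcomb (I : finType) (v : I -> V) (c : I -> K) : V := \sum_(i : I) c i *: v i.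
Definition in_span (I : finType) (v : I -> V) (x : V) := exists c, x = lcomb v c.
Definition lin_free (I : finType) (v : I -> V) := forall c, lcomb v c = 0 -> forall i, c i = 0.
Definition lin_closed (S : V -> Prop) :=
  S 0 /\ (forall x y, S x -> S y -> S (x + y)) /\ (forall a x, S x -> S (a *: x)).

Definition fcat (I J : finType) (v : I -> V) (u : J -> V) : (I + J)%type -> V :=
  fun s => match s with inl i => v i | inr j => u j end.
Definition fsnoc (I : finType) (v : I -> V) (x : V) := fcat v (fun _ : 'I_1 => x).

Lemma lcomb_fcat (I J : finType) (v : I -> V) (u : J -> V) c :
  lcomb (fcat v u) c = lcomb v (fun i => c (inl i)) + lcomb u (fun j => c (inr j)).
Proof. by rewrite /lcomb big_sumType. Qed.

Lemma lcomb_fsnoc (I : finType) (v : I -> V) x c :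
  lcomb (fsnoc v x) c = lcomb v (fun i => c (inl i)) + c (inr ord0) *: x.
Proof. by rewrite /fsnoc lcomb_fcat /lcomb big_ord1. Qed.

Lemma lcomb0 (I : finType) (v : I -> V) : lcomb v (fun _ => 0) = 0.
Proof. by rewrite /lcomb big1 // => i _; rewrite scale0r. Qed.

Lemma lcomb_ord0 (v : 'I_0 -> V) c : lcomb v c = 0.
Proof. by rewrite /lcomb big_ord0. Qed.

Lemma lcombD (I : finType) (v : I -> V) c d :
  lcomb v c + lcomb v d = lcomb v (fun i => c i + d i).
Proof. by rewrite /lcomb -big_split; apply: eq_bigr => i _; rewrite scalerDl. Qed.

Lemma lcombZ (I : finType) (v : I -> V) a c : a *: lcomb v c = lcomb v (fun i => a * c i).
Proof. by rewrite /lcomb scaler_sumr; apply: eq_bigr => i _; rewrite scalerA. Qed.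

Lemma lcombN (I : finType) (v : I -> V) c : - lcomb v c = lcomb v (fun i => - c i).
Proof. by rewrite /lcomb -sumrN; apply: eq_bigr => i _; rewrite scaleNr. Qed.

Lemma lcomb_delta (I : finType) (v : I -> V) i : lcomb v (fun j => (j == i)%:R) = v i.
Proof.
rewrite /lcomb (bigD1 i) //= eqxx scale1r big1 ?addr0 // => j /negPf ->.
by rewrite scale0r.
Qed.

Lemma in_span_mem (I : finType) (v : I -> V) i : in_span v (v i).
Proof. by exists (fun j => (j == i)%:R); rewrite lcomb_delta. Qed.

Lemma in_span_lin_closed (I : finType) (v : I -> V) : lin_closed (in_span v).
Proof.
split; first by exists (fun _ => 0); rewrite lcomb0.
split; first by move=> x y [c ->] [d ->]; exists (fun i => c i + d i); rewrite lcombD.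
by move=> a x [c ->]; exists (fun i => a * c i); rewrite lcombZ.
Qed.

Lemma lin_closed_span (S : V -> Prop) (I : finType) (v : I -> V) x :
  lin_closed S -> (forall i, S (v i)) -> in_span v x -> S x.
Proof.
move=> [S0 [SD SZ]] Sv [c ->]; rewrite /lcomb; elim/big_ind: _ => //.
by move=> i _; apply: SZ.
Qed.

Lemma lin_closedB (S : V -> Prop) a x y : lin_closed S -> S x -> S y -> S (y - a *: x).
Proof. by move=> [_ [SD SZ]] Sx Sy; rewrite -scaleNr; apply: SD => //; apply: SZ. Qed.

Lemma free_neq0 (I : finType) (v : I -> V) i : lin_free v -> v i != 0.
Proof.
move=> hv; apply/eqP => vi0.
have := hv (fun j => (j == i)%:R); rewrite lcomb_delta => /(_ vi0 i).
by rewrite eqxx; move/eqP; rewrite oner_eq0.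
Qed.

Lemma free_ord0 (v : 'I_0 -> V) : lin_free v.
Proof. by move=> c _ []. Qed.

Lemma free_fsnoc (I : finType) (v : I -> V) x : lin_free v -> ~ in_span v x -> lin_free (fsnoc v x).
Proof.
move=> hv nx c; rewrite lcomb_fsnoc => hc.
have cx0 : c (inr ord0) = 0.
  apply/eqP/negP => /negP cx; apply: nx.
  exists (fun i => - ((c (inr ord0))^-1 * c (inl i))).
  rewrite -lcombN -lcombZ.
  have -> : lcomb v (fun i => c (inl i)) = - (c (inr ord0) *: x).
    by apply/eqP; rewrite -addr_eq0 hc.
  by rewrite scalerN opprK scalerA mulVr ?scale1r //; apply: K_division.
move: hc; rewrite cx0 scale0r addr0 => /hv cv0.
by case=> [i|j]; [apply: cv0 | rewrite (ord1 j)].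
Qed.

Lemma in_span_fsnocl (I : finType) (v : I -> V) x y : in_span v y -> in_span (fsnoc v x) y.
Proof.
move=> [c ->]; exists (fun s => if s is inl i then c i else 0).
by rewrite lcomb_fsnoc scale0r addr0.
Qed.

Lemma in_span_fsnocr (I : finType) (v : I -> V) x : in_span (fsnoc v x) x.
Proof. exact: (in_span_mem (fsnoc v x) (inr ord0)). Qed.

Lemma lin_closed_fsnoc (S : V -> Prop) (I : finType) (v : I -> V) x :
  lin_closed S -> (forall i, S (v i)) -> S x -> incl (in_span (fsnoc v x)) S.
Proof. by move=> cS Sv Sx y; apply: lin_closed_span => // -[i|j] /=. Qed.

Section Exchange.
Variables (I J : finType) (w : J -> V).

Lemma pivot_eliminate (v : I -> V) (P : pred J) (a : I -> J -> K) i0 j0 i :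
  P j0 -> a i0 j0 != 0 ->
  v i0 = \sum_(j | P j) a i0 j *: w j -> v i = \sum_(j | P j) a i j *: w j ->
  let t := a i j0 * (a i0 j0)^-1 in
  v i - t *: v i0 = \sum_(j | [predD1 P & j0] j) (a i j - t * a i0 j) *: w j.
Proof.
move=> Pj0 a0 vi0 vi t; rewrite vi0 vi scaler_sumr -sumrB.
rewrite (bigD1 j0) //= scalerA /t -mulrA mulVr ?mulr1 ?subrr ?add0r; last exact: K_division.
by apply: eq_big => [j|j _]; [rewrite andbC | rewrite scalerBl scalerA].
Qed.

(* Steinitz exchange, by induction on [#|P|]: a pivot [a i0 j0 != 0] eliminates
   [w j0] from the other [v i]. *)
Lemma dependent_of_small_span n : forall (v : I -> V) (P : pred J) (Q : pred I)
    (a : I -> J -> K), #|P| = n -> (n < #|Q|)%N ->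
  (forall i, Q i -> v i = \sum_(j | P j) a i j *: w j) ->
  exists2 c : I -> K, \sum_(i | Q i) c i *: v i = 0 & exists2 i, Q i & c i != 0.
Proof.
elim: n => [|n IH] v P Q a cardP cardQ hv.
  have [i0 Qi0] := card_gt0P cardQ.
  have vi0 : v i0 = 0.
    by rewrite hv // big_pred0 // => j; rewrite -[P j]/(j \in P) (card0_eq cardP).
  exists (fun i => (i == i0)%:R); last by exists i0; rewrite ?eqxx ?oner_eq0.
  rewrite (bigD1 i0) //= vi0 scaler0 add0r big1 // => i /andP[_ /negPf ->].
  by rewrite scale0r.
have [j0 Pj0] : exists j0, j0 \in P by apply/card_gt0P; rewrite cardP.
have cardP' : #|[predD1 P & j0]| = n.
  by move: cardP; rewrite (cardD1 j0) Pj0 add1n => -[].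
have [a0|] := boolP [forall i, Q i ==> (a i j0 == 0)].
  apply: (IH v [predD1 P & j0] Q a cardP' (ltnW cardQ)) => i Qi.
  rewrite hv // (bigD1 j0) //= (eqP (implyP (forallP a0 i) Qi)) scale0r add0r.
  by apply: eq_bigl => j; rewrite andbC.
move=> /forallPn [i0]; rewrite negb_imply => /andP[Qi0 ai0].
pose t i := a i j0 * (a i0 j0)^-1.
have cardQ' : (n < #|[predD1 Q & i0]|)%N.
  by move: cardQ; rewrite (cardD1 i0) [i0 \in Q]Qi0 add1n ltnS.
have [c' relc' [i1 Q'i1 ci1]] := IH (fun i => v i - t i *: v i0) _ _ _ cardP' cardQ'
  (fun i Q'i => pivot_eliminate Pj0 ai0 (hv _ Qi0) (hv i (andP Q'i).2)).
pose c i := if i == i0 then - \sum_(i | [predD1 Q & i0] i) c' i * t i else c' i.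
exists c; last first.
  by move: Q'i1 => /andP[/= ne Qi1]; exists i1; rewrite // /c (negPf ne).
rewrite (bigD1 i0) //= /c eqxx scaleNr [LHS]addrC -[X in _ = X]relc'.
under [RHS]eq_bigr do rewrite scalerBr scalerA.
rewrite sumrB -scaler_suml; congr (_ - _).
by apply: eq_big => [i|i /andP[_ /negPf ->]]; first by rewrite andbC.
Qed.

End Exchange.

Lemma free_card_le (I J : finType) (v : I -> V) (w : J -> V) :
  lin_free v -> (forall i, in_span w (v i)) -> (#|I| <= #|J|)%N.
Proof.
move=> hv vw; have /all_sig [a ha] : forall i, {c | v i = lcomb w c}.
  by move=> i; apply: constructive_indefinite_description; exact: vw.
rewrite leqNgt; apply/negP => ltJI.
have [c relc [i _ ci]] := @dependent_of_small_span I J w #|J| v predT predT a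
  (eq_card (fun _ => erefl)) ltJI (fun i _ => ha i).
by move: ci; rewrite (hv c relc i) eqxx.
Qed.

Lemma has_dim_card (U : V -> Prop) (I : finType) (v : I -> V) :
  lin_free v -> (forall x, U x <-> in_span v x) -> has_dim U #|I|.
Proof.
move=> hv hU; have [g fK gK] := enum_val_bij I.
pose v' (k : 'I_#|I|) := v (enum_val k).
have lcombE c : lcomb v c = lcomb v' (fun k => c (enum_val k)).
  rewrite /lcomb -(big_enum_val (A := predT) (fun i => c i *: v i)).
  by apply: eq_bigl => i; rewrite inE.
exists v'; split.
  move=> c hc k; have := hv (fun i => c (g i)); rewrite lcombE.
  have -> : lcomb v' (fun k => c (g (enum_val k))) = lcomb v' c.
    by apply: eq_bigr => l _; rewrite fK.
  by move=> /(_ hc (enum_val k)); rewrite fK.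
move=> x; rewrite hU; split => [[c ->]|[c ->]].
  by exists (fun k => c (enum_val k)); rewrite lcombE.
by exists (fun i => c (g i)); rewrite lcombE; apply: eq_bigr => i _; rewrite fK.
Qed.

Lemma span_has_dim (I : finType) (v : I -> V) : lin_free v -> has_dim (in_span v) #|I|.
Proof. by move=> hv; apply: has_dim_card hv _. Qed.

Lemma has_dim_lin_closed (U : V -> Prop) m : has_dim U m -> lin_closed U.
Proof.
move=> [v [_ hU]]; have [S0 [SD SZ]] := in_span_lin_closed v.
split; first exact/hU.
split; first by move=> x y /hU ? /hU ?; apply/hU; apply: SD.
by move=> a x /hU ?; apply/hU; apply: SZ.
Qed.

Lemma has_dim_eq_span (S : V -> Prop) m (I : finType) (v : I -> V) :
  has_dim S m -> lin_free v -> #|I| = m -> (forall i, S (v i)) ->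
  forall x, S x <-> in_span v x.
Proof.
move=> hS hv cardI Sv x; split; last exact: lin_closed_span (has_dim_lin_closed hS) Sv.
move=> Sx; apply: NNPP => nx; have [b [hb hbS]] := hS.
suff : (#|{: I + 'I_1}| <= #|'I_m|)%N by rewrite card_sum !card_ord cardI addn1 ltnn.
by apply: (free_card_le (free_fsnoc hv nx)) => -[i|j] /=; apply/hbS.
Qed.

Lemma exists_outside (H B : V -> Prop) a b :
  has_dim H a -> has_dim B b -> (a < b)%N -> exists2 x, B x & ~ H x.
Proof.
move=> [h [hh hH]] [bb [hb hB]] ltab; apply: NNPP => nex.
suff : (b <= a)%N by rewrite leqNgt ltab.
rewrite -(card_ord b) -(card_ord a); apply: (free_card_le hb) => i.
apply/hH; apply: NNPP => nH; apply: nex; exists (bb i) => //.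
by apply/hB; apply: in_span_mem.
Qed.

Lemma free_fcatA (I1 I2 I3 : finType) (a : I1 -> V) (b : I2 -> V) (c : I3 -> V) :
  lin_free (fcat (fcat a b) c) -> lin_free (fcat a (fcat b c)).
Proof.
move=> h d hd; pose d' s := match s with
  | inl (inl i) => d (inl i) | inl (inr j) => d (inr (inl j)) | inr k => d (inr (inr k)) end.
have /h d'0 : lcomb (fcat (fcat a b) c) d' = 0 by rewrite -hd !lcomb_fcat addrA.
by case=> [i|[j|k]]; [exact: (d'0 (inl (inl i))) | exact: (d'0 (inl (inr j))) | exact: (d'0 (inr k))].
Qed.

Lemma in_span_fcatA (I1 I2 I3 : finType) (a : I1 -> V) (b : I2 -> V) (c : I3 -> V) x :
  in_span (fcat (fcat a b) c) x <-> in_span (fcat a (fcat b c)) x.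
Proof.
split=> -[d ->].
  exists (fun s => match s with
    | inl i => d (inl (inl i)) | inr (inl j) => d (inl (inr j)) | inr (inr k) => d (inr k) end).
  by rewrite !lcomb_fcat addrA.
exists (fun s => match s with
  | inl (inl i) => d (inl i) | inl (inr j) => d (inr (inl j)) | inr k => d (inr (inr k)) end).
by rewrite !lcomb_fcat addrA.
Qed.

Lemma lcomb_fcat0 (I : finType) (v : I -> V) (u : 'I_0 -> V) c :
  lcomb (fcat v u) c = lcomb v (fun i => c (inl i)).
Proof. by rewrite lcomb_fcat lcomb_ord0 addr0. Qed.

Lemma basis_fcat0 (S : V -> Prop) (I : finType) (v : I -> V) (u : 'I_0 -> V) :
  lin_free v -> (forall x, S x <-> in_span v x) ->
  lin_free (fcat v u) /\ forall x, S x <-> in_span (fcat v u) x.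
Proof.
move=> hv hS; split.
  by move=> c; rewrite lcomb_fcat0 => /hv c0 -[i|[]]; [apply: c0|].
move=> x; rewrite hS; split=> -[c ->]; last by exists (fun i => c (inl i)); rewrite lcomb_fcat0.
by exists (fun s => if s is inl i then c i else 0); rewrite lcomb_fcat0.
Qed.

Lemma free_fcatr (I J : finType) (v : I -> V) (u : J -> V) : lin_free (fcat v u) -> lin_free u.
Proof.
move=> hvu c hc j; have := hvu (fun s => if s is inr j then c j else 0).
by rewrite lcomb_fcat /= lcomb0 add0r hc => /(_ erefl (inr j)).
Qed.

Section Basis.
Variables (n : nat) (e : 'I_n -> V).
Hypotheses (e_free : lin_free e) (e_span : forall x, in_span e x).

Lemma free_card_le_dim (I : finType) (v : I -> V) : lin_free v -> (#|I| <= n)%N.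
Proof. by move=> hv; rewrite -(card_ord n); apply: free_card_le hv _ => i; apply: e_span. Qed.

Lemma spanning_card_ge_dim (I : finType) (v : I -> V) :
  (forall x, in_span v x) -> (n <= #|I|)%N.
Proof. by move=> hv; rewrite -(card_ord n); apply: free_card_le e_free _ => i; apply: hv. Qed.

Lemma exists_outside_span (I : finType) (v : I -> V) :
  (#|I| < n)%N -> exists x, ~ in_span v x.
Proof.
move=> ltIn; apply: NNPP => span_all.
suff : (n <= #|I|)%N by rewrite leqNgt ltIn.
by apply: (@spanning_card_ge_dim _ v) => x; apply: NNPP => nx; apply: span_all; exists x.
Qed.

Lemma extend_free (S : V -> Prop) (I : finType) (v : I -> V) :
  lin_closed S -> lin_free v -> (forall i, S (v i)) ->
  exists (J : finType) (u : J -> V),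
    lin_free (fcat v u) /\ forall x, S x <-> in_span (fcat v u) x.
Proof.
move=> cS; have [t ht] : exists t, (n - #|I| <= t)%N by exists (n - #|I|)%N.
elim: t I v ht => [|t IH] I v ht hv Sv.
  exists 'I_0, (fun _ => 0); apply: basis_fcat0 => // x.
  split; last exact: lin_closed_span.
  move=> Sx; apply: NNPP => nx; have := free_card_le_dim (free_fsnoc hv nx).
  by rewrite card_sum card_ord; lia.
case: (classic (exists2 x, S x & ~ in_span v x)) => [[x Sx nx]|Sspan]; last first.
  exists 'I_0, (fun _ => 0); apply: basis_fcat0 => // y.
  split; last exact: lin_closed_span.
  by move=> Sy; apply: NNPP => ny; apply: Sspan; exists y.
have hvx := free_fsnoc hv nx.
have ht' : (n - #|{: I + 'I_1}| <= t)%N.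
  by move: ht (free_card_le_dim hvx); rewrite card_sum card_ord; lia.
have [J [u [hu Su]]] := IH _ _ ht' hvx (fun s => if s is inl i then Sv i else Sx).
exists ('I_1 + J)%type, (fcat (fun _ => x) u); split; first exact: free_fcatA.
by move=> y; rewrite Su in_span_fcatA.
Qed.

Lemma lin_closed_has_dim (S : V -> Prop) : lin_closed S -> exists m, has_dim S m.
Proof.
move=> cS; have S0 : forall i : 'I_0, S ((fun _ => 0) i) by case.
have [J [u [hu Su]]] := extend_free cS (@free_ord0 (fun _ => 0)) S0.
by exists #|{: 'I_0 + J}|; apply: has_dim_card hu Su.
Qed.

Lemma exists_complement (W : V -> Prop) k m : has_dim W k -> (m + k)%N = n ->
  exists2 U, has_dim U m & forall x, U x -> W x -> x = 0.
Proof.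
move=> [w [hw hW]] mk.
have cT : lin_closed (fun _ => True) by [].
have [J [u [hwu wu_span]]] := extend_free cT hw (fun _ => I).
have cardJ : #|J| = m.
  have := free_card_le_dim hwu.
  have := @spanning_card_ge_dim _ (fcat w u) (fun x => proj1 (wu_span x) I).
  by rewrite card_sum card_ord; lia.
exists (in_span u); first by rewrite -cardJ; exact: span_has_dim (free_fcatr hwu).
move=> x [c ->] /hW [d hd].
have {}hd : lcomb u c = lcomb w d := hd.
have /hwu cd0 : lcomb (fcat w u) (fun s => match s with inl i => - d i | inr j => c j end) = 0.
  by rewrite lcomb_fcat /= -lcombN -hd addNr.
by rewrite -(lcomb0 u); apply: eq_bigr => j _; rewrite (cd0 (inr j)).
Qed.

Lemma exists_has_dim_over (I : finType) (v : I -> V) m :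
  (m <= n)%N -> lin_free v -> (#|I| <= m)%N -> exists2 U, has_dim U m & forall i, U (v i).
Proof.
move=> mn; have [t ht] : exists t, (m - #|I| <= t)%N by exists (m - #|I|)%N.
elim: t I v ht => [|t IH] I v ht hv Im.
  have <- : #|I| = m by lia.
  by exists (in_span v); [exact: span_has_dim | exact: in_span_mem].
have [<-|neIm] := eqVneq #|I| m.
  by exists (in_span v); [exact: span_has_dim | exact: in_span_mem].
have [x nx] := @exists_outside_span _ v ltac:(lia).
have Ixm : (#|{: I + 'I_1}| <= m)%N by rewrite card_sum card_ord; lia.
have [|U hU Uvx] := IH _ _ _ (free_fsnoc hv nx) Ixm; first by rewrite card_sum card_ord; lia.
by exists U => // i; exact: (Uvx (inl i)).
Qed.

Lemma exists_has_dim m : (m <= n)%N -> exists U : V -> Prop, has_dim U m.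
Proof.
move=> mn; have [|U hU _] := exists_has_dim_over mn (@free_ord0 (fun _ => 0)); last by exists U.
by rewrite card_ord.
Qed.

End Basis.

Definition meets (U W : V -> Prop) := exists x, x != 0 /\ U x /\ W x.

Definition meeting m (W : V -> Prop) (U : Defs.Sub V m) : Prop := meets (sval U) W.

Lemma meetsC (U W : V -> Prop) : meets U W <-> meets W U.
Proof. by split=> -[x [nx [Ux Wx]]]; exists x. Qed.

Lemma lin_closedI (U W : V -> Prop) :
  lin_closed U -> lin_closed W -> lin_closed (fun x => U x /\ W x).
Proof.
move=> [U0 [UD UZ]] [W0 [WD WZ]]; split => //; split.
  by move=> x y [? ?] [? ?]; split; [apply: UD | apply: WD].
by move=> a x [? ?]; split; [apply: UZ | apply: WZ].
Qed.

Lemma Sub_eq m (p q : Defs.Sub V m) : (forall x, sval p x <-> sval q x) -> p = q.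
Proof.
case: p q => [U hU] [U' hU'] /= UU'.
have E : U = U' by apply: functional_extensionality => x; apply: propositional_extensionality.
by subst U'; congr exist; apply: proof_irrelevance.
Qed.

Lemma card_fsnoc_pred m : (0 < m)%N -> #|{: 'I_m.-1 + 'I_1}| = m.
Proof. by move=> m0; rewrite card_sum !card_ord addn1 prednK. Qed.

Lemma has_dim_eq_span_fsnoc m (U : V -> Prop) (h : 'I_m.-1 -> V) y : (0 < m)%N ->
  has_dim U m -> lin_free h -> (forall i, U (h i)) -> U y -> ~ in_span h y ->
  forall x, U x <-> in_span (fsnoc h y) x.
Proof.
move=> m0 hU hh Uh Uy nhy.
apply: (has_dim_eq_span hU (free_fsnoc hh nhy)); first exact: card_fsnoc_pred.
by case=> [i|j] /=; [exact: Uh | exact: Uy].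
Qed.

Lemma pencil_members_eq m (H U U' : V -> Prop) y : (0 < m)%N ->
  has_dim H m.-1 -> has_dim U m -> has_dim U' m -> incl H U -> incl H U' ->
  U y -> U' y -> ~ H y -> forall x, U x <-> U' x.
Proof.
move=> m0 [h [hh hH]] hU hU' HU HU' Uy U'y nHy x.
have nhy : ~ in_span h y by move/hH.
have Hh i : H (h i) by apply/hH; apply: in_span_mem.
rewrite (has_dim_eq_span_fsnoc m0 hU hh (fun i => HU _ (Hh i)) Uy nhy).
by rewrite (has_dim_eq_span_fsnoc m0 hU' hh (fun i => HU' _ (Hh i)) U'y nhy).
Qed.

Lemma has_dim_hyperplane_decomp m (U B : V -> Prop) : has_dim U m -> has_dim B m.+1 ->
  incl U B -> exists z, forall w, B w -> exists a, U (w - a *: z).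
Proof.
move=> hU hB UB; have [z Bz nUz] := exists_outside hU hB (ltnSn m).
have [u [hu hUu]] := hU; exists z => w.
have nuz : ~ in_span u z by move/hUu.
rewrite (has_dim_eq_span hB (free_fsnoc hu nuz)); last 2 first.
- by rewrite card_sum !card_ord addn1.
- by case=> [i|j] /=; [apply: UB; apply/hUu; apply: in_span_mem | exact: Bz].
move=> [c ->]; exists (c (inr ord0)); apply/hUu.
by exists (fun i => c (inl i)); rewrite lcomb_fsnoc addrK.
Qed.

Definition pencil m (H B U : V -> Prop) := has_dim U m /\ incl H U /\ incl U B.

Lemma pencil_meets m (H B W U U' U'' : V -> Prop) : (0 < m)%N ->
  has_dim H m.-1 -> has_dim B m.+1 ->
  pencil m H B U -> pencil m H B U' -> pencil m H B U'' -> lin_closed W ->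
  ~ (forall x, U x <-> U' x) -> meets U W -> meets U' W -> meets U'' W.
Proof.
move=> m0 hH hB [hU [HU UB]] [hU' [HU' U'B]] [hU'' [HU'' U''B]] cW neUU'
  [x [nx [Ux Wx]]] [y [ny [U'y Wy]]].
(* Modulo [U''], both [x] and [y] are multiples of one vector [z]. *)
have [z decomp] := has_dim_hyperplane_decomp hU'' hB U''B.
have [a U''x] := decomp x (UB x Ux); have [a' U''y] := decomp y (U'B y U'y).
have [a0|an0] := eqVneq a 0.
  by exists x; split => //; split => //; move: U''x; rewrite a0 scale0r subr0.
pose t := a' * a^-1.
have yx_eq : y - t *: x = (y - a' *: z) - t *: (x - a *: z).
  rewrite scalerBr scalerA /t -mulrA mulVr ?mulr1; last exact: K_division.
  by rewrite opprB addrA subrK.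
have [yx0|nyx] := eqVneq (y - t *: x) 0; last first.
  exists (y - t *: x); split => //; split; last exact: lin_closedB.
  by rewrite yx_eq; apply: lin_closedB (has_dim_lin_closed hU'') U''x U''y.
have Uy : U y by rewrite (subr0_eq yx0); apply: (has_dim_lin_closed hU).2.2.
have [Hy|nHy] := classic (H y); first by exists y; split => //; split => //; apply: HU''.
by case: neUU'; apply: (pencil_members_eq m0 hH hU hU' HU HU' Uy U'y nHy).
Qed.

Lemma exists_pencil_member_through m (H B : V -> Prop) z : (0 < m)%N ->
  has_dim H m.-1 -> has_dim B m.+1 -> incl H B -> B z -> exists2 U, pencil m H B U & U z.
Proof.
move=> m0 dimH hB HB Bz.
have [y [By nHy Hz_or_yz]] : exists y, [/\ B y, ~ H y & H z \/ y = z].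
  have [Hz|nHz] := classic (H z); last by exists z; split => //; right.
  have [y By nHy] := exists_outside dimH hB (leq_ltn_trans (leq_pred m) (ltnSn m)).
  by exists y; split => //; left.
have [h [hh hH]] := dimH.
have nhy : ~ in_span h y by move/hH.
have Hh i : H (h i) by apply/hH; apply: in_span_mem.
exists (in_span (fsnoc h y)); last first.
  by case: Hz_or_yz => [/hH|->]; [exact: in_span_fsnocl | exact: in_span_fsnocr].
split; first by move: (span_has_dim (free_fsnoc hh nhy)); rewrite card_fsnoc_pred.
split; first by move=> x /hH; exact: in_span_fsnocl.
by apply: lin_closed_fsnoc (has_dim_lin_closed hB) _ By => i; apply: HB.
Qed.

Lemma hyperplane_meets_plane m (H U W : V -> Prop) (v : 'I_2 -> V) : (0 < m)%N ->
  has_dim H m.-1 -> has_dim U m -> incl H U -> lin_closed W -> lin_free v ->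
  (forall i, U (v i) /\ W (v i)) -> meets H W.
Proof.
move=> m0 dimH hU HU cW hv UWv.
have [[Ux Wx] [Uy Wy]] := (UWv ord0, UWv ord_max).
have [Hx|nHx] := classic (H (v ord0)); first by exists (v ord0); split => //; apply: free_neq0.
have [h [hh hH]] := dimH.
have Hh i : H (h i) by apply/hH; apply: in_span_mem.
have nhx : ~ in_span h (v ord0) by move/hH.
have [c] := (has_dim_eq_span_fsnoc m0 hU hh (fun i => HU _ (Hh i)) Ux nhx (v ord_max)).1 Uy.
rewrite lcomb_fsnoc => vy.
exists (v ord_max - c (inr ord0) *: v ord0); split; [|split; [|exact: lin_closedB]].
- apply/eqP => /eqP; rewrite subr_eq0 => /eqP vyx.
  have := hv (fun i => if i == ord0 then - c (inr ord0) else 1).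
  have l1 : lift ord0 ord0 = ord_max :> 'I_2 by apply: val_inj.
  rewrite /lcomb big_ord_recl big_ord1 /= l1 vyx scaleNr scale1r addNr => /(_ erefl ord_max) /eqP.
  by rewrite oner_eq0.
- by apply/hH; exists (fun i => c (inl i)); rewrite vy addrK.
Qed.

Section Grassmann.
Variables (n : nat) (e : 'I_n -> V).
Hypotheses (e_free : lin_free e) (e_span : forall x, in_span e x).

Lemma Hk_meets k1 k2 (p : Defs.Sub V k1 * Defs.Sub V k2) :
  Hk p <-> meets (sval p.1) (sval p.2).
Proof.
split=> [[d [d0 [f [hf hS]]]]|[x [nx [x1 x2]]]].
  by exists (f (Ordinal d0)); split; [exact: free_neq0 | apply/hS; apply: in_span_mem].
have [d hd] := lin_closed_has_dim e_span
  (lin_closedI (has_dim_lin_closed (svalP p.1)) (has_dim_lin_closed (svalP p.2))).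
exists d; split => //; case: d hd => // -[f [_ hS]].
have [c hc] : in_span f x by apply/hS.
by move: nx; rewrite hc lcomb_ord0 eqxx.
Qed.

Lemma meets_of_dim_gt b k (B W : V -> Prop) :
  has_dim B b -> has_dim W k -> (n < b + k)%N -> meets B W.
Proof.
move=> [u [hu hB]] [w [hw hW]] ltn_bk.
have [c [relc [s cs]]] : exists c, lcomb (fcat u w) c = 0 /\ exists s, c s != 0.
  apply: NNPP => nodep; suff : (#|{: 'I_b + 'I_k}| <= n)%N.
    by rewrite card_sum !card_ord leqNgt ltn_bk.
  apply: (@free_card_le_dim _ e e_span _ (fcat u w)) => d hd s.
  by apply: NNPP => ds; apply: nodep; exists d; split => //; exists s; apply/eqP.
pose z := lcomb u (fun i => c (inl i)).
exists z; split; last split.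
- apply/eqP => z0; have cu0 : forall i, c (inl i) = 0 by apply: hu.
  move: relc; rewrite lcomb_fcat -/z z0 add0r => /hw cw0.
  by move: cs; case: s => [i|j]; rewrite ?cu0 ?cw0 eqxx.
- by apply/hB; exists (fun i => c (inl i)).
apply/hW; exists (fun j => - c (inr j)); rewrite -[lincomb _ _]/(lcomb _ _) -lcombN.
by apply/eqP; rewrite -addr_eq0 -lcomb_fcat relc.
Qed.

Lemma meeting_hyperplane m k (W : V -> Prop) : (0 < m)%N -> (m + k)%N = n ->
  has_dim W k -> is_hyperplane (gr_line m) (meeting W).
Proof.
move=> m0 mk hW; split; [|split].
- move=> l [H [B [hH [hB [HB hl]]]]] [p [q [pq [/hl lp [/hl lq [Wp Wq]]]]]] r /hl lr.
  have pencil_of (s : Defs.Sub V m) : incl H (sval s) /\ incl (sval s) B -> pencil m H B (sval s).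
    by move=> [Hs sB]; split; first exact: (svalP s).
  apply: (pencil_meets m0 hH hB (pencil_of p lp) (pencil_of q lq) (pencil_of r lr)
    (has_dim_lin_closed hW) _ Wp Wq) => pq_eq.
  by apply: pq; apply: Sub_eq.
- have [U hU UW0] := exists_complement e_free e_span hW mk.
  exists (exist _ U hU) => -[x [nx [Ux Wx]]].
  by move: nx; rewrite (UW0 x Ux Wx) eqxx.
move=> l [H [B [hH [hB [HB hl]]]]].
have [z [nz [Bz Wz]]] : meets B W by apply: meets_of_dim_gt hB hW _; lia.
have [U [hU [HU UB]] Uz] := exists_pencil_member_through m0 hH hB HB Bz.
by exists (exist _ U hU); split; [exact/hl | exists z].
Qed.

Lemma exists_common_plane m1 m2 : (1 < m1 <= n)%N -> (1 < m2 <= n)%N ->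
  exists (U1 : Defs.Sub V m1) (U2 : Defs.Sub V m2),
    exists2 v : 'I_2 -> V, lin_free v & forall i, sval U1 (v i) /\ sval U2 (v i).
Proof.
move=> /andP[m1_gt1 m1n] /andP[m2_gt1 m2n].
have [_ [v [hv _]]] := exists_has_dim e_free (leq_trans m1_gt1 m1n).
have [U1 hU1 U1v] := exists_has_dim_over e_free m1n hv (leq_trans (eq_leq (card_ord 2)) m1_gt1).
have [U2 hU2 U2v] := exists_has_dim_over e_free m2n hv (leq_trans (eq_leq (card_ord 2)) m2_gt1).
by exists (exist _ U1 hU1), (exist _ U2 hU2), v => // i; split; [exact: U1v | exact: U2v].
Qed.

End Grassmann.

Lemma gr_line_meeting m (W : V -> Prop) (v : 'I_2 -> V) l (U U' : Defs.Sub V m) :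
  (0 < m)%N -> lin_closed W -> lin_free v -> (forall i, sval U (v i) /\ W (v i)) ->
  gr_line m l -> l U -> l U' -> meeting W U'.
Proof.
move=> m0 cW hv UWv [H [B [hH [hB [HB hl]]]]] /hl [HU _] /hl [HU' _].
have [x [nx [Hx Wx]]] := hyperplane_meets_plane m0 hH (svalP U) HU cW hv UWv.
by exists x; split => //; split => //; apply: HU'.
Qed.

End LinearAlgebra.

Theorem proposition4p17 (K : unitRingType) (V : lmodType K) (n k1 k2 : nat) :
  is_division_ring K ->
  has_dim (fun _ : V => True) n ->
  (1 < k1)%N -> (k1 < n - 1)%N -> (k1 + k2)%N = n ->
  let L := segre_line (@gr_line K V k1) (@gr_line K V k2) in
  is_hyperplane L (@Hk K V k1 k2) /\
  non_degenerate (@gr_line K V k1) (@gr_line K V k2) (@Hk K V k1 k2) /\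
  ~ spiky L (@Hk K V k1 k2).
Proof.
move=> K_division [e [e_free V_span]] k1_gt1 k1_lt k1k2 L.
have e_span x : in_span e x := proj1 (V_span x) I.
have k2k1 : (k2 + k1)%N = n by rewrite addnC.
have HkE := Hk_meets K_division e_span.
have sections (a : Defs.Sub V k1 * Defs.Sub V k2) :
    is_hyperplane (gr_line k1) (section1 Hk a) /\ is_hyperplane (gr_line k2) (section2 Hk a).
  split.
  - apply: hyperplane_eq (meeting_hyperplane K_division e_free e_span _ k1k2 (svalP a.2)) => [U|].
      by rewrite /section1 HkE.
    by lia.
  - apply: hyperplane_eq (meeting_hyperplane K_division e_free e_span _ k2k1 (svalP a.1)) => [U|].
      by rewrite /section2 HkE meetsC.
    by lia.
have [U1 [U2 [v v_free Uv]]] := exists_common_plane K_division e_free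
  (m1 := k1) (m2 := k2) ltac:(lia) ltac:(lia).
have Hk_hyperplane := segre_hyperplane sections (U1, U2).
split => //; split => //.
apply: (segre_not_spiky (p := (U1, U2))) => /= [|l1 U hl1 l1U1 l1U|l2 U hl2 l2U2 l2U].
- by apply/HkE; exists (v ord0); split; [exact: free_neq0 | exact: Uv].
- by apply/HkE; apply: (gr_line_meeting K_division _ _ v_free Uv hl1 l1U1 l1U);
    [lia | exact: has_dim_lin_closed (svalP U2)].
- apply/HkE/meetsC; apply: (gr_line_meeting K_division _ _ v_free _ hl2 l2U2 l2U); first lia.
    exact: has_dim_lin_closed (svalP U1).
  by move=> i; have [] := Uv i.
Qed.
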